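(* Let $r,M$ be positive integers with $M\ge2$, and let $\mathcal C=\{0,\dots,M-1\}^r\subset\mathbb Z^r$. Let $\tau=\tau_M$ be the (positive) solution of $$\left(\frac1M\right)^{2\tau}+\left(\frac{M-1}{M}\right)^{\tau}=1.$$ Then for any subsets $A,B\subset\mathcal C$ we have $|A+B|\ge(|A||B|)^\tau$.
   Context: $A+B=\{a+b: a\in A, b\in B\}$, computed in $\mathbb Z^r$. *)

From HB Require Import structures.
From mathcomp Require Import all_boot all_order all_algebra finmap.
From mathcomp Require Import reals exp.
Set Implicit Arguments. Unset Strict Implicit. Unset Printing Implicit Defensive.
Import Order.TTheory GRing.Theory Num.Theory.
Local Open Scope ring_scope.

Definition cube (r M : nat) : pred 'rV[int]_r :=
  fun v => [forall i : 'I_r, (0 <= v ord0 i) && (v ord0 i < M%:Z)].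

Definition sumset (r : nat) (A B : {fset 'rV[int]_r}) : {fset 'rV[int]_r} :=
  [fset (a + b)%R | a in A, b in B]%fset.
Arguments cube r M v : clear implicits.

From HB Require Import structures.
From mathcomp Require Import all_boot all_order all_algebra finmap.
From mathcomp Require Import reals normedtype exp derive realfun convex interval_inference.
From mathcomp Require Import ring lra zify.
Set Implicit Arguments. Unset Strict Implicit. Unset Printing Implicit Defensive.
Import Order.TTheory GRing.Theory Num.Theory numFieldNormedType.Exports.
Local Open Scope ring_scope.

(* Put phi t m = m ^ (2 t) + (1 - m) ^ t, so that phi tau (1/M) = 1. The analytic core is
   phi tau m >= 1 for 1/M <= m <= 1 (phi dips below 1 near 0, equals 1 at 1/M and is >= 1 near 1,
   and its derivative changes sign like a concave function); it yields
   (P q q') ^ tau + (P (1 - q)) ^ tau >= P ^ tau whenever 1/M <= q <= q' <= 1.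
   The combinatorial argument is an induction on |A| + |B|. Choose a coordinate along which A (or B)
   is not constant, so that all fibres A_x, B_y are smaller and |A_x + B_y| >= (|A_x| |B_y|) ^ tau by
   induction. Then consume the fibres of A and B, heaviest first. If X, Y are the unconsumed parts
   and a, b their heaviest fibres, then a >= |X| / M as there are at most M fibres, and the bound
   |I + J| >= |I| + |J| - 1 for the consumed indices provides an unconsumed fibre of A + B containing
   a sum of fibres at least as heavy as a and b. Consuming it together with either the a-fibre or
   the b-fibre, the inequality above with {q, q'} = {a / |X|, b / |Y|} closes the induction. *)

Section PowerInequality.
Variable R : realType.

Lemma concave_ln_weighted (l a b : R) : 0 < a -> 0 < b -> 0 <= l -> l <= 1 ->
  l * ln a + (1 - l) * ln b <= ln (l * a + (1 - l) * b).
Proof.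
move=> a0 b0 l0 l1.
by have := @concave_ln R (Itv01 l0 l1) a b a0 b0; rewrite !convRE.
Qed.

Lemma powR1B_le (t d : R) : 0 <= t -> t <= 1 -> 0 <= d -> d < 1 ->
  (1 - d) `^ t <= 1 - t * d.
Proof.
move=> t0 t1 d0 d1.
have d1' : 0 < 1 - d by rewrite subr_gt0.
have tdd : t * d <= d by rewrite ler_piMl.
have td : 0 < 1 - t * d by lra.
have := concave_ln_weighted d1' ltr01 t0 t1.
rewrite ln1 mulr0 addr0 mulr1 (_ : t * (1 - d) + (1 - t) = 1 - t * d); last by ring.
by move=> le_ln; rewrite /powR gt_eqF // -[X in _ <= X]lnK ?posrE // ler_expR.
Qed.

Definition phi (t m : R) := m `^ (2 * t) + (1 - m) `^ t.
Definition dphi (t m : R) := 2 * t * m `^ (2 * t - 1) - t * (1 - m) `^ (t - 1).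

(* The logarithm of the ratio of the two terms of [dphi t x]. *)
Definition psi (t x : R) := ln 2 + (2 * t - 1) * ln x + (1 - t) * ln (1 - x).

Lemma is_derive_phi (t m : R) : 0 < m -> m < 1 -> is_derive m 1 (phi t) (dphi t m).
Proof.
move=> m0 m1.
have -> : dphi t m = 2 * t * m `^ (2 * t - 1) + t * (1 - m) `^ (t - 1) * (0 - 1).
  by rewrite /dphi; ring.
apply: is_deriveD; first exact: is_derive1_powR.
have -> : (fun x : R => (1 - x) `^ t) = (fun y : R => y `^ t) \o (fun x : R => 1 - x) by [].
apply: is_derive1_comp; first by apply: is_derive1_powR; rewrite subr_gt0.
Qed.

Lemma phi_MVT (t a b : R) : 0 < a -> a < b -> b < 1 ->
  exists2 x, a < x < b & phi t b - phi t a = dphi t x * (b - a).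
Proof.
move=> a0 ab b1.
have derivable_phi : {in `[a, b]%R, forall x, derivable (phi t) x 1}.
  move=> x; rewrite in_itv /= => /andP[ax xb].
  by apply: ex_derive; apply: is_derive_phi; [exact: lt_le_trans ax | exact: le_lt_trans b1].
have phi' : forall x, x \in `]a, b[%R -> is_derive x 1 (phi t) (dphi t x).
  move=> x; rewrite in_itv /= => /andP[ax xb].
  by apply: is_derive_phi; [exact: lt_trans ax | exact: lt_trans b1].
have [x] := MVT ab phi' (derivable_within_continuous derivable_phi).
by rewrite in_itv; exists x.
Qed.

Lemma dphi_psi_sign (t x : R) : 0 < t -> 0 < x -> x < 1 ->
  ((0 < dphi t x) = (0 < psi t x)) * ((dphi t x < 0) = (psi t x < 0)).
Proof.
move=> t0 x0 x1.
have x1' : 0 < 1 - x by rewrite subr_gt0.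
set P := 2 * x `^ (2 * t - 1); set Q := (1 - x) `^ (t - 1).
have P0 : 0 < P by rewrite mulr_gt0 // powR_gt0.
have Q0 : 0 < Q by rewrite powR_gt0.
have -> : dphi t x = t * (P - Q) by rewrite /dphi /P /Q; ring.
have -> : psi t x = ln P - ln Q.
  by rewrite /psi /P /Q lnM ?posrE ?powR_gt0 // !ln_powR; ring.
rewrite pmulr_rgt0 // pmulr_rlt0 // !subr_gt0 !subr_lt0.
by rewrite !ltr_ln ?posrE.
Qed.

Lemma psi_gt0_between (t x0 x1 x2 : R) : 1/2 <= t -> t <= 1 ->
  0 < x0 -> x0 < x1 -> x1 < x2 -> x2 < 1 ->
  0 < psi t x0 -> 0 < psi t x2 -> 0 < psi t x1.
Proof.
move=> th t1 p0 p01 p12 p2 L0 L2.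
set l := (x2 - x1) / (x2 - x0).
have d0 : 0 < x2 - x0 by rewrite subr_gt0 (lt_trans p01 p12).
have l0 : 0 < l by rewrite divr_gt0 // subr_gt0.
have l1 : l < 1 by rewrite ltr_pdivrMr // mul1r; lra.
have e1 : x1 = l * x0 + (1 - l) * x2 by rewrite /l; field; rewrite gt_eqF.
have e2 : 1 - x1 = l * (1 - x0) + (1 - l) * (1 - x2) by rewrite e1; ring.
have c1 := @concave_ln_weighted l x0 x2 p0 (ltac:(lra)) (ltW l0) (ltW l1).
have c2 := @concave_ln_weighted l (1 - x0) (1 - x2) (ltac:(lra)) (ltac:(lra)) (ltW l0) (ltW l1).
rewrite -e1 in c1; rewrite -e2 in c2.
have := ler_wpM2l (ltac:(lra) : 0 <= 2 * t - 1) c1.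
have := ler_wpM2l (ltac:(lra) : 0 <= 1 - t) c2.
have := mulr_gt0 l0 L0; have := mulr_gt0 (ltac:(lra) : 0 < 1 - l) L2.
rewrite /psi; nra.
Qed.

Lemma phi_ge1_near1 (t : R) : 0 < t -> t < 1 ->
  exists2 e, 0 < e <= 1/2 & forall m, 1 - e <= m -> m <= 1 -> 1 <= phi t m.
Proof.
move=> t0 t1.
set e := (2^-1 : R) `^ ((1 - t)^-1).
have e0 : 0 < e by rewrite powR_gt0.
have e_half : e <= 1/2.
  rewrite mul1r; apply: ge1r_powR; first by rewrite invr_gt0 ltr0n /= invf_le1 // ler1n.
  by rewrite invf_ge1; lra.
exists e; first by rewrite e0.
move=> m me m1.
have m0 : 0 < m by lra.
have [->|mn1] := eqVneq m 1; first by rewrite /phi subrr powR1 powR0 ?gt_eqF // addr0.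
have y0 : 0 < 1 - m by rewrite subr_gt0 lt_neqAle mn1.
have m2_le : m ^+ 2 <= m `^ (2 * t).
  by rewrite -powR_mulrn ?(ltW m0) //; apply: ger_powR; [rewrite m0 | lra].
(* [(1 - m) ^ (1 - t) <= 1/2] lets [(1 - m) ^ t] absorb twice [1 - m], and [m^2 + 2 (1 - m) >= 1]. *)
have y_half : (1 - m) `^ (1 - t) <= 2^-1.
  have : (1 - m) `^ (1 - t) <= e `^ (1 - t) by apply: ge0_ler_powR; rewrite ?nnegrE; lra.
  by rewrite -powRrM mulVf ?powRr1 //; lra.
have y_split : 1 - m = (1 - m) `^ t * (1 - m) `^ (1 - t).
  rewrite -powRD; last by rewrite (gt_eqF y0) implybT.
  have -> : t + (1 - t) = 1 by ring.
  by rewrite powRr1 // ltW.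
have : 0 <= (1 - m) `^ t * (2^-1 - (1 - m) `^ (1 - t)).
  by apply: mulr_ge0; rewrite ?powR_ge0 ?subr_ge0.
rewrite /phi; nra.
Qed.

Lemma phi_lt1_near0 (t c : R) : 1/2 < t -> t < 1 -> 0 < c -> c <= 1 ->
  exists2 d, 0 < d < c & phi t d < 1.
Proof.
move=> th t1 c0 c1; have t0 : 0 < t by lra.
(* [d] is small enough that [d ^ (2 t) <= d t / 2], while Bernoulli gives [(1 - d) ^ t <= 1 - t d]. *)
set d := Num.min (c / 2) ((t / 2) `^ ((2 * t - 1)^-1)).
have d0 : 0 < d by rewrite lt_min divr_gt0 // powR_gt0 // divr_gt0.
have [dc dt] : d <= c / 2 /\ d <= (t / 2) `^ ((2 * t - 1)^-1) by apply/andP; rewrite -le_min.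
exists d; first by rewrite d0; lra.
have dt' : d `^ (2 * t - 1) <= t / 2.
  have : d `^ (2 * t - 1) <= ((t / 2) `^ ((2 * t - 1)^-1)) `^ (2 * t - 1).
    by apply: ge0_ler_powR; rewrite ?nnegrE ?powR_ge0 //; lra.
  by rewrite -powRrM mulVf ?powRr1 ?divr_ge0 //; lra.
have d2t : d `^ (2 * t) = d * d `^ (2 * t - 1).
  by rewrite mulr_powRB1 ?(ltW d0) //; lra.
have := @powR1B_le t d (ltac:(lra)) (ltac:(lra)) (ltac:(lra)) (ltac:(lra)).
have : d * d `^ (2 * t - 1) <= d * (t / 2) by rewrite ler_wpM2l // ltW.
rewrite /phi d2t; nra.
Qed.

Lemma tau_lt1 (c t : R) : 0 < c -> c <= 1/2 -> phi t c = 1 -> t < 1.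
Proof.
move=> c0 c_half phi_c; rewrite ltNge; apply/negP => t1.
have : c `^ (2 * t) <= c `^ 2 by apply: ger_powR; [rewrite c0 /=; lra | lra].
have : (1 - c) `^ t <= 1 - c by apply: ge1r_powR => //; apply/andP; split; lra.
have : c `^ 2 < c by rewrite powR_mulrn ?ltW // expr2 gtr_pMr //; lra.
move: phi_c; rewrite /phi; lra.
Qed.

Lemma tau_gt_half (c t : R) : 0 < c -> c <= 1/2 -> phi t c = 1 -> 1/2 < t.
Proof.
move=> c0 c_half phi_c; have t1 := tau_lt1 c0 c_half phi_c.
rewrite ltNge; apply/negP => th.
have : c <= c `^ (2 * t) by apply: ger1_powR; [rewrite c0 /=; lra | lra].
have : 1 - c < (1 - c) `^ t.
  rewrite /powR gt_eqF; last lra.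
  rewrite -[X in X < _]lnK ?posrE; last lra.
  rewrite ltr_expR; have : ln (1 - c) < 0 by apply: ln_lt0; apply/andP; split; lra.
  nra.
move: phi_c; rewrite /phi; lra.
Qed.

(* By the MVT, a dip of [phi] below 1 between [c] and the region near 1 where [phi >= 1], together
   with the dip before [c], forces [dphi] to be positive, negative, then positive; this contradicts
   the concavity of [psi]. *)
Lemma phi_ge1 (c t m : R) : 0 < c -> c <= 1/2 -> phi t c = 1 ->
  c <= m -> m <= 1 -> 1 <= phi t m.
Proof.
move=> c0 c_half phi_c cm m1; rewrite leNgt; apply/negP => phi_m.
have th := tau_gt_half c0 c_half phi_c; have t1 := tau_lt1 c0 c_half phi_c.
have t0 : 0 < t by lra.
have [e /andP[e0 e_half] phi_near1] := phi_ge1_near1 t0 t1.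
have [d /andP[d0 dc] phi_d] := phi_lt1_near0 th t1 c0 (ltac:(lra)).
have me : m < 1 - e.
  by rewrite ltNge; apply/negP => me; have := phi_near1 m me m1; lra.
have cm' : c < m by rewrite lt_neqAle cm andbT; apply: contraTneq phi_m => <-; lra.
have phi_e := phi_near1 (1 - e) (lexx _) (ltac:(lra)).
have [x0 /andP[dx0 x0c] E0] := @phi_MVT t d c d0 dc (ltac:(lra)).
have [x1 /andP[cx1 x1m] E1] := @phi_MVT t c m c0 cm' (ltac:(lra)).
have [x2 /andP[mx2 x2e] E2] := @phi_MVT t m (1 - e) (ltac:(lra)) me (ltac:(lra)).
have D0 : 0 < dphi t x0 by rewrite -(pmulr_lgt0 _ (ltac:(lra) : 0 < c - d)) -E0; lra.
have D1 : dphi t x1 < 0 by rewrite -(pmulr_llt0 _ (ltac:(lra) : 0 < m - c)) -E1; lra.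
have D2 : 0 < dphi t x2 by rewrite -(pmulr_lgt0 _ (ltac:(lra) : 0 < 1 - e - m)) -E2; lra.
rewrite (dphi_psi_sign t0 (ltac:(lra) : 0 < x0) (ltac:(lra) : x0 < 1)) in D0.
rewrite (dphi_psi_sign t0 (ltac:(lra) : 0 < x1) (ltac:(lra) : x1 < 1)) in D1.
rewrite (dphi_psi_sign t0 (ltac:(lra) : 0 < x2) (ltac:(lra) : x2 < 1)) in D2.
have := @psi_gt0_between t x0 x1 x2 (ltac:(lra)) (ltac:(lra)) (ltac:(lra)) (ltac:(lra))
  (ltac:(lra)) (ltac:(lra)) D0 D2.
lra.
Qed.

Lemma powR_le_split (c t P q q' : R) : 0 < c -> c <= 1/2 -> phi t c = 1 ->
  0 < P -> c <= q -> q <= q' -> q' <= 1 ->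
  P `^ t <= (P * (q * q')) `^ t + (P * (1 - q)) `^ t.
Proof.
move=> c0 c_half phi_c P0 cq qq' q'1.
have t0 : 0 <= t by have := tau_gt_half c0 c_half phi_c; lra.
have q0 : 0 < q by lra.
have phi_q := phi_ge1 c0 c_half phi_c cq (le_trans qq' q'1).
have q2t : q `^ (2 * t) <= (q * q') `^ t.
  rewrite powRrM powR_mulrn ?(ltW q0) // expr2.
  by apply: ge0_ler_powR; rewrite ?nnegrE ?mulr_ge0 ?ler_wpM2l //; lra.
have qq'0 : 0 <= q * q' by rewrite mulr_ge0 //; lra.
have q1 : 0 <= 1 - q by lra.
rewrite (powRM _ (ltW P0) qq'0) (powRM _ (ltW P0) q1) -mulrDr -[X in X <= _]mulr1 ler_wpM2l ?powR_ge0 //.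
by move: phi_q; rewrite /phi; lra.
Qed.

Lemma powR_mul_le_split (c t X Y a b h : R) : 0 < c -> c <= 1/2 -> phi t c = 1 ->
  0 < a -> a <= X -> 0 < b -> b <= Y -> c * X <= a -> c * Y <= b ->
  (a * b) `^ t + ((X - a) * Y) `^ t <= h -> (a * b) `^ t + (X * (Y - b)) `^ t <= h ->
  (X * Y) `^ t <= h.
Proof.
move=> c0 c_half phi_c a0 aX b0 bY caX cbY splitX splitY.
have X0 : 0 < X by lra.
have Y0 : 0 < Y by lra.
have P0 : 0 < X * Y by rewrite mulr_gt0.
have cqa : c <= a / X by rewrite ler_pdivlMr // mulrC.
have cqb : c <= b / Y by rewrite ler_pdivlMr // mulrC.
have qa1 : a / X <= 1 by rewrite ler_pdivrMr // mul1r.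
have qb1 : b / Y <= 1 by rewrite ler_pdivrMr // mul1r.
have [ab|ba] := leP (a / X) (b / Y).
  have := powR_le_split c0 c_half phi_c P0 cqa ab qb1.
  have -> : X * Y * (a / X * (b / Y)) = a * b by field; rewrite !gt_eqF.
  have -> : X * Y * (1 - a / X) = (X - a) * Y by field; rewrite gt_eqF.
  lra.
have := powR_le_split c0 c_half phi_c P0 cqb (ltW ba) qa1.
have -> : X * Y * (b / Y * (a / X)) = a * b by field; rewrite !gt_eqF.
have -> : X * Y * (1 - b / Y) = X * (Y - b) by field; rewrite gt_eqF.
lra.
Qed.

End PowerInequality.

Local Open Scope fset_scope.

Lemma cardfs_sep (T : choiceType) (X : {fset T}) (P : pred T) :
  #|` X| = (#|` [fset x in X | P x]| + #|` [fset x in X | ~~ P x]|)%N.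
Proof.
rewrite -(cardfsID [fset x in X | P x] X); congr (_ + _)%N; congr #|` _|;
  by apply/fsetP => x; rewrite !inE; case: (x \in X); rewrite ?andbT.
Qed.

Lemma exists_seq_max (d : Order.disp_t) (T : orderType d) (s : seq T) :
  s != [::] -> exists2 m, m \in s & forall x, x \in s -> (x <= m)%O.
Proof.
elim: s => // a s IH _.
have [->|/IH [m ms Hm]] := eqVneq s [::].
  by exists a; rewrite ?inE // => x; rewrite inE => /eqP ->.
have [am|ma] := leP a m.
  by exists m; rewrite ?inE ?ms ?orbT // => x; rewrite inE => /predU1P[->|/Hm].
exists a; rewrite ?inE ?eqxx // => x; rewrite inE => /predU1P[->//|/Hm xm].
exact: le_trans xm (ltW ma).
Qed.

Definition sumfs (V : zmodType) (I J : {fset V}) : {fset V} := [fset (i + j)%R | i in I, j in J].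

Lemma card_sumfs_ge (R : realDomainType) (n : nat) (I J : {fset R}) :
  #|` I| = n.+1 -> J != fset0 -> (#|` J| + n <= #|` sumfs I J|)%N.
Proof.
elim: n I => [|n IH] I cI J0.
  move/eqP: cI => /cardfs1P [i ->].
  rewrite addn0 (_ : sumfs _ J = [fset (i + j)%R | j in J]).
    by rewrite card_in_imfset // => x y _ _ /addrI.
  apply/fsetP => z; apply/imfset2P/imfsetP => [[x /fset1P -> [j jJ ->]]|[j jJ ->]].
    by exists j.
  by exists i; rewrite ?inE //; exists j.
have [m mI Hm] : exists2 m, m \in I & forall x, x \in I -> x <= m.
  by apply: exists_seq_max; apply/eqP => eI; move: cI; rewrite eI.
have [mj mjJ Hmj] : exists2 m, m \in J & forall x, x \in J -> x <= m.
  apply: exists_seq_max; apply: contraNneq J0 => eJ.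
  by apply/eqP/fsetP => x; rewrite inE -[x \in J]/(x \in (J : seq R)) eJ.
have cIm : #|` I `\ m| = n.+1 by move: cI; rewrite (cardfsD1 m I) mI add1n => -[].
(* The largest sum [m + mj] is not a sum from [I `\ m]. *)
have sub : sumfs (I `\ m) J `<=` sumfs I J `\ (m + mj)%R.
  apply/fsubsetP => z /imfset2P [i + [j jJ ->]]; rewrite !inE => /andP[im iI].
  apply/andP; split; last by apply/imfset2P; exists i => //; exists j.
  by rewrite lt_eqF // ltr_leD ?Hmj // lt_neqAle im Hm.
have := fsubset_leq_card sub; rewrite (cardfsD1 (m + mj)%R (sumfs I J)).
have -> : (m + mj)%R \in sumfs I J by apply/imfset2P; exists m => //; exists mj.
by rewrite add1n addnS ltnS => /(leq_trans (IH _ cIm J0)).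
Qed.

Lemma exists_fresh_sum (R : realDomainType) (S T U : {fset R}) x y :
  x \notin S -> y \notin T -> (#|` U| <= #|` S| + #|` T|)%N ->
  exists2 i0, i0 \in x |` S & exists2 j0, j0 \in y |` T & (i0 + j0)%R \notin U.
Proof.
move=> xS yT cU.
have T0 : y |` T != fset0 by apply/fset0Pn; exists y; rewrite !inE eqxx.
have := card_sumfs_ge (_ : #|` x |` S| = #|` S|.+1) T0.
rewrite !cardfsU1 xS yT /= => /(_ erefl) cUST.
have /fsubsetPn [s /imfset2P [i0 iS [j0 jT ->]] sU] : ~~ (sumfs (x |` S) (y |` T) `<=` U).
  apply: contraTN cUST => /fsubset_leq_card/leq_trans/(_ cU) le_ST.
  by rewrite -ltnNge add1n addSn ltnS addnC.
by exists i0 => //; exists j0.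
Qed.

Section Fibres.
Variables (r : nat) (i : 'I_r).
Implicit Types (A B : {fset 'rV[int]_r}) (S : {fset int}).

Definition entry (v : 'rV[int]_r) : int := v ord0 i.
Definition fibre A (k : int) := [fset a in A | entry a == k].
Definition fibres_notin A S := [fset a in A | entry a \notin S].
Definition fibres_dominate A S :=
  forall x y, x \in S -> y \notin S -> (#|` fibre A y| <= #|` fibre A x|)%N.

Lemma fibres_notin0 A : fibres_notin A fset0 = A.
Proof. by apply/fsetP => a; rewrite !inE andbT. Qed.

Lemma card_fibres_notinU1 A S x : x \notin S ->
  #|` fibres_notin A S| = (#|` fibre A x| + #|` fibres_notin A (x |` S)|)%N.
Proof.
move=> xS; rewrite (cardfs_sep (fibres_notin A S) (fun a => entry a == x)).
by congr (_ + _)%N; congr #|` _|; apply/fsetP => a; rewrite !inE;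
  case: (eqVneq (entry a) x) => [->|]; rewrite ?xS ?andbT ?andbF.
Qed.

Lemma fibres_dominateU1 A S x : fibres_dominate A S -> x \notin S ->
  (forall y, y \notin S -> (#|` fibre A y| <= #|` fibre A x|)%N) ->
  fibres_dominate A (x |` S).
Proof.
move=> domS xS xmax u v; rewrite !inE negb_or => /predU1P[->|uS] /andP[_ vS].
  exact: xmax.
exact: domS.
Qed.

Lemma sumset_fibre A B x y :
  sumset (fibre A x) (fibre B y) `<=` fibre (sumset A B) (x + y)%R.
Proof.
apply/fsubsetP => z /imfset2P [a + [b + ->]]; rewrite !inE => /andP[aA /eqP ax] /andP[bB /eqP bx].
rewrite /entry mxE -/(entry a) -/(entry b) ax bx eqxx andbT.
by apply/imfset2P; exists a => //; exists b.
Qed.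

Lemma fibre_sub A x : fibre A x `<=` A.
Proof. by apply/fsubsetP => a; rewrite inE => /andP[]. Qed.

Lemma card_fibre_lt A a a' x : a \in A -> a' \in A -> entry a != entry a' ->
  (#|` fibre A x| < #|` A|)%N.
Proof.
move=> aA a'A aa'; rewrite (cardfs_sep A (fun z => entry z == x)) -[X in (X < _)%N]addn0.
rewrite ltn_add2l cardfs_gt0; apply/fset0Pn.
have [ax|] := eqVneq (entry a) x; last by exists a; rewrite !inE aA.
by exists a'; rewrite !inE a'A -ax eq_sym.
Qed.

Variable M : nat.

Lemma entry_cube a : a \in cube r M -> (0 <= entry a < M%:Z)%R.
Proof. by move/forallP/(_ i). Qed.

Lemma card_fibres_range (X : {fset 'rV[int]_r}) n :
  #|` [fset a in X | (0 <= entry a < n%:Z)%R]| = (\sum_(k < n) #|` fibre X k%:Z|)%N.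
Proof.
elim: n => [|n IH].
  rewrite big_ord0; apply/eqP; rewrite cardfs_eq0; apply/eqP/fsetP => a; rewrite !inE.
  by case: (a \in X); case: leP => //= ?; apply/negbTE; rewrite -leNgt.
rewrite big_ord_recr /= -IH addnC.
rewrite (cardfs_sep [fset a in X | (0 <= entry a < n.+1%:Z)%R] (fun a => entry a == n%:Z)).
by congr (_ + _)%N; congr #|` _|; apply/fsetP => a; rewrite !inE; case: (a \in X) => //=;
  case: (eqVneq (entry a) n%:Z) => [->|ne] /=; rewrite ?andbT ?andbF //; lia.
Qed.

Lemma card_fibres_notin_le A S a : {subset A <= cube r M} ->
  (forall y, y \notin S -> (#|` fibre A y| <= a)%N) -> (#|` fibres_notin A S| <= M * a)%N.
Proof.
move=> hA fibre_le.
have -> : fibres_notin A S = [fset b in fibres_notin A S | (0 <= entry b < M%:Z)%R].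
  apply/fsetP => b; rewrite !inE; case bA: (b \in A) => //=.
  by case: (entry b \in S); rewrite //= entry_cube ?hA.
rewrite card_fibres_range -[M in (M * a)%N]card_ord -sum_nat_const.
apply: leq_sum => k _; have [kS|kS] := boolP (k%:Z \in S).
  suff -> : fibre (fibres_notin A S) k%:Z = fset0 by rewrite cardfs0.
  by apply/fsetP => b; rewrite !inE; case: eqP => [->|]; rewrite ?kS ?andbF.
apply: leq_trans (fibre_le _ kS); apply/fsubset_leq_card/fsubsetP => b.
by rewrite !inE => /andP[/andP[-> _] ->].
Qed.

Lemma exists_heaviest_fibre A S : {subset A <= cube r M} -> fibres_notin A S != fset0 ->
  exists2 x, x \notin S & forall y, y \notin S -> (#|` fibre A y| <= #|` fibre A x|)%N.
Proof.
move=> hA /fset0Pn [a0]; rewrite inE => /andP[a0A a0S].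
have /andP[a0_ge0 a0_ltM] := entry_cube (hA _ a0A).
have a0M : (absz (entry a0) < M)%N by lia.
pose P (k : 'I_M) := k%:Z \notin S.
have P0 : P (Ordinal a0M) by rewrite /P /= gez0_abs.
have [k Pk kmax] := @arg_maxnP _ (Ordinal a0M) P (fun k => #|` fibre A k%:Z|) P0.
exists k%:Z => // y yS.
have [/andP[y0 yM] | y_out] := boolP (0 <= y < M%:Z)%R.
  have yM' : (absz y < M)%N by lia.
  by have := kmax (Ordinal yM'); rewrite /P /= gez0_abs //; apply.
suff -> : fibre A y = fset0 by rewrite cardfs0.
apply/fsetP => a; rewrite !inE; apply/negbTE; apply: contra y_out => /andP[aA /eqP <-].
exact: entry_cube (hA _ aA).
Qed.

End Fibres.

Lemma ler_powR_natM (R : realType) (t : R) (x y x' y' : nat) : 0 <= t ->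
  (x <= x')%N -> (y <= y')%N -> (x%:R * y%:R) `^ t <= (x'%:R * y'%:R) `^ t :> R.
Proof.
move=> t0 xx' yy'; apply: ge0_ler_powR; rewrite ?nnegrE ?mulr_ge0 //.
by apply: ler_pM; rewrite ?ler_nat.
Qed.

Lemma invn_mul_ler (R : numFieldType) (M X a : nat) : (0 < M)%N ->
  (X <= M * a)%N -> M%:R^-1 * X%:R <= a%:R :> R.
Proof. by move=> M0 XMa; rewrite mulrC ler_pdivrMr ?ltr0n // -natrM ler_nat mulnC. Qed.

Lemma invn_le_half (R : numFieldType) (M : nat) : (2 <= M)%N -> M%:R^-1 <= 1/2 :> R.
Proof. by move=> hM; rewrite mul1r lef_pV2 ?posrE ?ler_nat ?ltr0n //; case: M hM. Qed.

Lemma tau_gt0 (R : realType) (M : nat) (t : R) : (2 <= M)%N -> phi t M%:R^-1 = 1 -> 0 < t.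
Proof.
move=> hM phi_M; have c_gt0 : 0 < M%:R^-1 :> R by rewrite invr_gt0 ltr0n; case: M hM phi_M.
by have := tau_gt_half c_gt0 (invn_le_half _ hM) phi_M; apply: lt_trans; rewrite divr_gt0.
Qed.

Section GreedyMerge.
Variables (R : realType) (r M : nat) (i : 'I_r) (t : R).
Hypotheses (hM : (2 <= M)%N) (phi_M : phi t M%:R^-1 = 1).
Variables (A B : {fset 'rV[int]_r}).
Hypotheses (hA : {subset A <= cube r M}) (hB : {subset B <= cube r M}).
Hypothesis fibre_bound : forall x y : int,
  (#|` fibre i A x|%:R * #|` fibre i B y|%:R) `^ t
    <= #|` sumset (fibre i A x) (fibre i B y)|%:R :> R.

Let M_gt0 : (0 < M)%N := ltnW hM.
Let c_gt0 : 0 < M%:R^-1 :> R.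
Proof. by rewrite invr_gt0 ltr0n. Qed.

Let c_half : M%:R^-1 <= 1/2 :> R := invn_le_half R hM.
Let t_gt0 : 0 < t := tau_gt0 hM phi_M.

Lemma heavy_fresh_fibre S T x y i0 j0 :
  fibres_dominate i A S -> fibres_dominate i B T -> x \notin S -> y \notin T ->
  i0 \in x |` S -> j0 \in y |` T ->
  (#|` fibre i A x|%:R * #|` fibre i B y|%:R) `^ t
    <= #|` fibre i (sumset A B) (i0 + j0)%R|%:R :> R.
Proof.
move=> domS domT xS yT i0S j0T.
have le_x : (#|` fibre i A x| <= #|` fibre i A i0|)%N.
  by move: i0S; rewrite !inE => /orP[/eqP -> // | i0S]; apply: domS.
have le_y : (#|` fibre i B y| <= #|` fibre i B j0|)%N.
  by move: j0T; rewrite !inE => /orP[/eqP -> // | j0T]; apply: domT.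
apply: le_trans (ler_powR_natM (ltW t_gt0) le_x le_y) _.
apply: le_trans (fibre_bound i0 j0) _.
by rewrite ler_nat; apply/fsubset_leq_card/sumset_fibre.
Qed.

Lemma greedy_fibres_bound n : forall S T U : {fset int},
  (#|` fibres_notin i A S| + #|` fibres_notin i B T| <= n)%N ->
  fibres_dominate i A S -> fibres_dominate i B T -> (#|` U| <= #|` S| + #|` T|)%N ->
  (#|` fibres_notin i A S|%:R * #|` fibres_notin i B T|%:R) `^ t
    <= #|` fibres_notin i (sumset A B) U|%:R :> R.
Proof.
elim: n => [|n IHn] S T U le_n domS domT cU.
  move: le_n; rewrite leqn0 addn_eq0 => /andP[/eqP -> _].
  by rewrite mul0r powR0 ?gt_eqF.
have [->|neA] := eqVneq (fibres_notin i A S) fset0; first by rewrite cardfs0 mul0r powR0 ?gt_eqF.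
have [->|neB] := eqVneq (fibres_notin i B T) fset0; first by rewrite cardfs0 mulr0 powR0 ?gt_eqF.
have [x xS xmax] := exists_heaviest_fibre hA neA.
have [y yT ymax] := exists_heaviest_fibre hB neB.
have [i0 i0S [j0 j0T sU]] := exists_fresh_sum xS yT cU.
have cardA := card_fibres_notinU1 i A xS.
have cardB := card_fibres_notinU1 i B yT.
have leA := card_fibres_notin_le hA xmax.
have leB := card_fibres_notin_le hB ymax.
have a_gt0 : (0 < #|` fibre i A x|)%N.
  by rewrite lt0n; apply: contra neA => /eqP a0; move: leA; rewrite a0 muln0 leqn0 cardfs_eq0.
have b_gt0 : (0 < #|` fibre i B y|)%N.
  by rewrite lt0n; apply: contra neB => /eqP b0; move: leB; rewrite b0 muln0 leqn0 cardfs_eq0.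
have cU' : (#|` (i0 + j0)%R |` U| <= #|` x |` S| + #|` T|)%N by rewrite !cardfsU1 sU xS !add1n addSn ltnS.
have cU'' : (#|` (i0 + j0)%R |` U| <= #|` S| + #|` y |` T|)%N by rewrite !cardfsU1 sU yT !add1n addnS ltnS.
have heavy := heavy_fresh_fibre domS domT xS yT i0S j0T.
rewrite (card_fibres_notinU1 _ _ sU) natrD.
apply: (powR_mul_le_split (a := #|` fibre i A x|%:R) (b := #|` fibre i B y|%:R) c_gt0 c_half phi_M).
- by rewrite ltr0n.
- by rewrite ler_nat cardA leq_addr.
- by rewrite ltr0n.
- by rewrite ler_nat cardB leq_addr.
- exact: invn_mul_ler.
- exact: invn_mul_ler.
- rewrite [in X in X - _]cardA natrD addrAC subrr add0r; apply: lerD heavy _.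
  by apply: IHn (fibres_dominateU1 domS xS xmax) domT cU'; lia.
- rewrite [in X in X - _]cardB natrD addrAC subrr add0r; apply: lerD heavy _.
  by apply: IHn domS (fibres_dominateU1 domT yT ymax) cU''; lia.
Qed.

Lemma sumset_bound_of_fibres : (#|` A|%:R * #|` B|%:R) `^ t <= #|` sumset A B|%:R :> R.
Proof.
have := @greedy_fibres_bound (#|` A| + #|` B|) fset0 fset0 fset0.
by rewrite !fibres_notin0; apply => // x y; rewrite inE.
Qed.

End GreedyMerge.

Lemma exists_entry_neq (r : nat) (a a' : 'rV[int]_r) : a != a' ->
  exists i : 'I_r, entry i a != entry i a'.
Proof.
move=> aa'; apply/existsP; apply: contraNT aa' => /existsPn eq_entries.
by apply/eqP/rowP => j; move/negPn/eqP: (eq_entries j); rewrite /entry => ->.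
Qed.

Lemma exists_small_fibres (r : nat) (A : {fset 'rV[int]_r}) : (1 < #|` A|)%N ->
  exists i : 'I_r, forall x, (#|` fibre i A x| < #|` A|)%N.
Proof.
move=> A2; have /fset0Pn [a aA] : A != fset0 by rewrite -cardfs_gt0 ltnW.
have /fset0Pn [a' /fsetD1P [a'a a'A]] : A `\ a != fset0.
  by rewrite -cardfs_gt0; move: A2; rewrite (cardfsD1 a A) aA.
have [i ne] := exists_entry_neq a'a.
by exists i => x; apply: card_fibre_lt ne.
Qed.

Lemma sumset_bound_small (R : realType) (r : nat) (t : R) (A B : {fset 'rV[int]_r}) :
  0 < t -> (#|` A| <= 1)%N -> (#|` B| <= 1)%N ->
  (#|` A|%:R * #|` B|%:R) `^ t <= #|` sumset A B|%:R :> R.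
Proof.
move=> t0 A1 B1.
have [->|[a aA]] := fset_0Vmem A; first by rewrite cardfs0 mul0r powR0 ?gt_eqF.
have [->|[b bB]] := fset_0Vmem B; first by rewrite cardfs0 mulr0 powR0 ?gt_eqF.
have -> : #|` A| = 1%N by apply/eqP; rewrite eqn_leq A1 cardfs_gt0; apply/fset0Pn; exists a.
have -> : #|` B| = 1%N by apply/eqP; rewrite eqn_leq B1 cardfs_gt0; apply/fset0Pn; exists b.
rewrite mulr1 powR1 ler1n cardfs_gt0; apply/fset0Pn; exists (a + b)%R.
by apply/imfset2P; exists a => //; exists b.
Qed.

Lemma sumset_cube_bound (R : realType) (r M : nat) (t : R) :
  (2 <= M)%N -> phi t M%:R^-1 = 1 ->
  forall n (A B : {fset 'rV[int]_r}), (#|` A| + #|` B| <= n)%N ->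
  {subset A <= cube r M} -> {subset B <= cube r M} ->
  (#|` A|%:R * #|` B|%:R) `^ t <= #|` sumset A B|%:R :> R.
Proof.
move=> hM phi_M n; have t0 := tau_gt0 hM phi_M.
elim: n => [|n IHn] A B le_n hA hB; first by apply: sumset_bound_small; lia.
have by_fibres i : (forall x y, (#|` fibre i A x| + #|` fibre i B y| <= n)%N) ->
    (#|` A|%:R * #|` B|%:R) `^ t <= #|` sumset A B|%:R :> R.
  move=> le_fibres; apply: (sumset_bound_of_fibres hM phi_M hA hB) => x y.
  by apply: IHn => // a; rewrite inE => /andP[+ _]; [apply: hA | apply: hB].
have [A2|A1] := ltnP 1 #|` A|.
  have [i ltA] := exists_small_fibres A2; apply: (by_fibres i) => x y.
  by have := ltA x; have := fsubset_leq_card (fibre_sub i B y); lia.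
have [B2|B1] := ltnP 1 #|` B|; last exact: sumset_bound_small.
have [i ltB] := exists_small_fibres B2; apply: (by_fibres i) => x y.
by have := ltB y; have := fsubset_leq_card (fibre_sub i A x); lia.
Qed.

Local Close Scope fset_scope.

Theorem theorem5 (R : realType) (r M : nat) (hr : (0 < r)%N) (hM : (2 <= M)%N)
  (tau : R) (htau : 0 < tau)
  (heq : (M%:R^-1) `^ (2 * tau) + ((M - 1)%:R / M%:R) `^ tau = 1)
  (A B : {fset 'rV[int]_r})
  (hA : {subset A <= cube r M}) (hB : {subset B <= cube r M}) :
  (#|` A|%:R * #|` B|%:R) `^ tau <= (#|` sumset A B|%:R : R).
Proof.
have M_gt0 : (0 < M)%N := ltnW hM.
have phi_M : phi tau M%:R^-1 = 1.
  rewrite -[RHS]heq /phi natrB //; congr (_ + _ `^ _).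
  by field; rewrite pnatr_eq0 -lt0n.
exact: (sumset_cube_bound hM phi_M (leqnn _) hA hB).
Qed.
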